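(* For every positive integer $n$ and every $\epsilon\ge 0$ (with the case $\epsilon=4$ understood as the limit $\epsilon\to4$ of the right-hand side), $$\sum_{i=1}^n\left|\Phi^{-1}\left(\frac{i}{n+1}\right)\right|^{2\epsilon}\le 2^{\frac{11}{4}\epsilon+1}(n+1)^{\frac{\epsilon}{4}}\left(1+\frac{\left(\left\lceil\frac{n+1}{2}\right\rceil\right)^{1-\frac{\epsilon}{4}}-1}{1-\frac{\epsilon}{4}}\right).$$
   Context: $\Phi^{-1}$ is the quantile function (inverse CDF) of the standard normal distribution; $\lceil\cdot\rceil$ is the ceiling function. *)

From Stdlib Require Import Reals Lra ClassicalEpsilon.
From Coquelicot Require Import Coquelicot.
Open Scope R_scope.

Definition std_normal_pdf (t : R) : R := exp (- t ^ 2 / 2) / sqrt (2 * PI).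

Definition Phi (x : R) : R :=
  RInt_gen std_normal_pdf (Rbar_locally m_infty) (at_point x).

Definition Phi_inv (p : R) : R :=
  epsilon (inhabits 0) (fun x => Phi x = p).

Definition rpow (x y : R) : R :=
  if Req_EM_T x 0 then (if Req_EM_T y 0 then 1 else 0) else Rpower x y.

(* (c^{1-e/4} - 1)/(1-e/4), with value at e = 4 the limit ln c *)
Definition bracket_term (c e : R) : R :=
  if Req_EM_T e 4 then ln c
  else (rpow c (1 - e / 4) - 1) / (1 - e / 4).

Definition ceil_half_succ (n : nat) : nat := Nat.div (n + 2) 2.

(** Let [x = Phi_inv p] and [m = min p (1 - p)].  The Gaussian tail bound
    [1 - Phi x <= exp (- x ^ 2 / 2) / 2] for [x >= 1] and the estimate
    [y ^ 8 exp (- y ^ 2 / 2) <= 2 ^ 12] give [m x ^ 8 <= 2 ^ 11], that is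
    [|x| ^ (2 eps) <= 2 ^ (11 eps / 4) m ^ (- eps / 4)].  For [p = (k + 1) / (n + 1)]
    we have [m = j / (n + 1)] with [j = min (k + 1) (n - k) <= ceil ((n + 1) / 2) = c],
    and every such [j] arises from at most two indices [k].  Since [t ^ (- eps / 4)]
    is nonincreasing, [sum_(1 <= j <= c) j ^ (- eps / 4) <= 1 + int_1^c t ^ (- eps / 4) dt],
    and this integral is the bracket in the statement.  That [Phi_inv] inverts [Phi]
    at all rests on the Gaussian integral [int_R exp (- t ^ 2) dt = sqrt PI]. *)

From Stdlib Require Import Reals Lra Lia ClassicalEpsilon.
From Coquelicot Require Import Coquelicot.
From mathcomp Require all_boot all_order all_algebra all_classical all_reals all_analysis.
From mathcomp Require Rstruct Rstruct_topology.
Open Scope R_scope.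

Definition gauss (t : R) : R := exp (- t ^ 2).

Lemma continuous_gauss t : continuous gauss t.
Proof.
apply (ex_derive_continuous (K:=R_AbsRing) (V:=R_NormedModule)).
unfold gauss. auto_derive. trivial.
Qed.

Lemma derivable_pt_lim_RInt (f : R -> R) a x :
  (forall y, continuous f y) -> derivable_pt_lim (RInt f a) x (f x).
Proof.
intros f_cont. apply is_derive_Reals, (is_derive_RInt f (RInt f a) a x).
- exists (mkposreal 1 Rlt_0_1). intros y _.
  apply (RInt_correct (V:=R_CompleteNormedModule)).
  apply (ex_RInt_continuous (V:=R_CompleteNormedModule)). intros z _. apply f_cont.
- apply f_cont.
Qed.

(* MathComp-Analysis evaluates the Gaussian integral with the Lebesgue integral and
   its own [pi]; this module transfers the result to [RInt] and [PI]. *)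
Module GaussIntegral.
Import all_boot all_order all_algebra all_classical all_reals all_analysis.
Import Rstruct Rstruct_topology.
Import Order.TTheory GRing.Theory Num.Theory numFieldNormedType.Exports.
Local Open Scope classical_set_scope.
Local Open Scope ring_scope.

Lemma Rcos_cos (x : R) : Rtrigo_def.cos x = cos x.
Proof.
suff cos_lim : series (cos_coeff' x) @ \oo --> Rtrigo_def.cos x.
  exact: cvg_unique cos_lim (@cvg_cos_coeff' R x).
rewrite /Rtrigo_def.cos; case: exist_cos => c; rewrite /cos_in /infinite_sum => c_lim.
rewrite -cvg_shiftS; apply/cvgrPdist_lt => e /RltP /c_lim[N HN].
near=> n.
have nN : (n >= N)%coq_nat by apply/ssrnat.leP; near: n; exact: nbhs_infty_ge.
move: (HN _ nN) => /[!RdistE] /RltP /=.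
rewrite distrC sum_f_R0E; congr (`| _ - _ | < e).
apply: eq_bigr => k _.
rewrite /cos_n /cos_coeff' RdivE ?RpowE ?INRE ?factE -exprnP /Rsqr.
have -> : (x * x)%coqR = x ^+ 2 by rewrite expr2.
rewrite -exprM; change ((2 * k)%coq_nat) with (2 * k)%N.
by rewrite mul2n mulrAC.
Unshelve. all: by end_near. Qed.

Lemma pi_PI : pi = PI.
Proof.
have [pihalf_02 cos_pihalf] := @pihalf_02_cos_pihalf R.
have cos_PIhalf : cos (PI / 2) = 0 by rewrite -Rcos_cos; exact: cos_PI2.
have PI_le4 : PI <= 4 by apply/RleP; have := PI_4; rewrite IZRposE INRE.
suff : pi / 2 = PI / 2 by move=> /(congr1 ( *%R^~ 2)); rewrite !divfK.
apply: cos_inj; rewrite ?in_itv /= ?cos_PIhalf //; apply/andP; split.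
- by case/andP: pihalf_02.
- by rewrite ler_pdivrMr // ler_peMr // ?pi_ge0 ?ler1n.
- by rewrite divr_ge0 //; apply/RleP; exact: Rlt_le _ _ PI_RGT_0.
- by rewrite (le_trans _ (pi_ge2 R)) // ler_pdivrMr // -natrM.
Qed.

Lemma derivable_pt_lim_derive1 (f : R^o -> R^o) x l : derivable_pt_lim f x l ->
  derivable f x 1 /\ (f^`())%classic x = l.
Proof.
move=> f_lim.
have quot_lim : (fun h : R^o => h^-1 *: (f (h + x) - f x)) @ 0^' --> l.
  apply/cvgrPdist_lt => e /RltP e_pos.
  have [d Hd] := f_lim e e_pos.
  apply/nbhs_ballP; exists (pos d); first by apply/RltP; exact: cond_pos d.
  move=> t /= t_ball /eqP t_neq0.
  have t_lt : (Rabs t < d)%coqR.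
    by apply/RltP; move: t_ball; rewrite /ball /= sub0r normrN RabsE.
  have := Hd t t_neq0 t_lt.
  by move/RltP; rewrite RabsE distrC RdivE RminusE RplusE [x + t]addrC mulrC.
split; last by rewrite /derive1; exact: cvg_lim.
apply/cvg_ex; exists l; apply: cvg_trans quot_lim; apply: near_eq_cvg.
by near=> h; rewrite /= [h *: 1]mulr1.
Unshelve. all: by end_near. Qed.

Lemma integral_RInt (f : R -> R) a b : a < b -> (forall x, continuity_pt f x) ->
  (\int[lebesgue_measure]_(x in `[a, b]) (f x)%:E)%E = (RInt f a b)%:E.
Proof.
move=> ab f_cont.
pose F : R^o -> R^o := RInt f a.
have F_deriv y : derivable F y 1 /\ (F^`())%classic y = f y.
  apply: derivable_pt_lim_derive1; apply: derivable_pt_lim_RInt => z.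
  exact/continuity_pt_filterlim.
have F_cont : continuous F.
  by move=> y; apply/differentiable_continuous/derivable1_diffP; exact: (F_deriv y).1.
rewrite (@continuous_FTC2 _ f F a b ab).
- by rewrite -EFinB /F RInt_point subr0.
- by apply: continuous_subspaceT => x; exact/continuity_ptE.
- split; first by move=> y _; exact: (F_deriv y).1.
  + exact/cvg_at_right_filter/F_cont.
  + exact/cvg_at_left_filter/F_cont.
- by move=> y _; exact: (F_deriv y).2.
Qed.

Lemma RInt_gauss_sqr_lim (e : R) : (0 < e)%coqR -> exists M : R, forall x : R,
  (M < x)%coqR -> (Rabs ((RInt gauss 0 x) ^ 2 - PI / 4) < e)%coqR.
Proof.
move=> /RltP e_pos.
have := @gauss_integral_proof.cvg_integral0_gauss_sqr R.
move/cvgrPdist_lt => /(_ e e_pos) [M [_ HM]].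
exists (Rmax M 0) => x Mx.
have xM : M < x by apply/RltP; exact: Rle_lt_trans (Rmax_l M 0) Mx.
have x_pos : 0 < x by apply/RltP; exact: Rle_lt_trans (Rmax_r M 0) Mx.
have := HM x xM.
have -> : gauss_integral_proof.integral0_gauss x = RInt gauss 0 x.
  rewrite /gauss_integral_proof.integral0_gauss /Rintegral.
  rewrite -[RInt _ _ _]/(fine (RInt gauss 0 x)%:E) -integral_RInt //; last first.
    by move=> t; exact/continuity_pt_filterlim/continuous_gauss.
  by congr fine; apply: eq_integral => t _; rewrite /gauss_fun /gauss RexpE RpowE.
rewrite pi_PI => gauss_close; apply/RltP.
by rewrite RabsE RminusE RpowE RdivE distrC IZRposE INRE.
Qed.
End GaussIntegral.

Lemma sqrt_2PI_ge2 : 2 <= sqrt (2 * PI).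
Proof.
rewrite <- (sqrt_square 2) at 1 by lra.
apply sqrt_le_1_alt. pose proof PI2_1. lra.
Qed.

Lemma continuous_std_normal_pdf t : continuous std_normal_pdf t.
Proof.
apply (ex_derive_continuous (K:=R_AbsRing) (V:=R_NormedModule)).
unfold std_normal_pdf. auto_derive. pose proof sqrt_2PI_ge2. lra.
Qed.

Lemma std_normal_pdf_gt0 t : 0 < std_normal_pdf t.
Proof.
apply Rdiv_lt_0_compat; [apply exp_pos|]. pose proof sqrt_2PI_ge2. lra.
Qed.

Lemma std_normal_pdf_opp t : std_normal_pdf (- t) = std_normal_pdf t.
Proof. unfold std_normal_pdf. do 3 f_equal. ring. Qed.

Lemma std_normal_pdf_gauss t :
  std_normal_pdf t = gauss (t / sqrt 2) / sqrt PI / sqrt 2.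
Proof.
assert (s2 : 0 < sqrt 2) by (apply sqrt_lt_R0; lra).
assert (sP : 0 < sqrt PI) by (apply sqrt_lt_R0, PI_RGT_0).
unfold std_normal_pdf, gauss.
rewrite sqrt_mult_alt by lra.
replace (- (t / sqrt 2) ^ 2) with (- t ^ 2 / sqrt 2 ^ 2) by (field; lra).
rewrite pow2_sqrt by lra. field. lra.
Qed.

Lemma ex_RInt_std_normal_pdf a b : ex_RInt std_normal_pdf a b.
Proof.
apply (ex_RInt_continuous (V:=R_CompleteNormedModule)).
intros t _. apply continuous_std_normal_pdf.
Qed.

Definition Phi0 (x : R) : R := RInt std_normal_pdf 0 x.

Lemma RInt_std_normal_pdf a b : RInt std_normal_pdf a b = Phi0 b - Phi0 a.
Proof.
unfold Phi0.
rewrite <- (RInt_Chasles (V:=R_CompleteNormedModule) std_normal_pdf 0 a b)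
  by apply ex_RInt_std_normal_pdf.
cbn. unfold plus. cbn. ring.
Qed.

Lemma continuity_Phi0 : continuity Phi0.
Proof.
intros x. apply derivable_continuous_pt. exists (std_normal_pdf x).
apply derivable_pt_lim_RInt, continuous_std_normal_pdf.
Qed.

Lemma Phi0_ge0 x : 0 <= x -> 0 <= Phi0 x.
Proof.
intros x_ge0. apply RInt_ge_0; [exact x_ge0 | apply ex_RInt_std_normal_pdf |].
intros t _. left. apply std_normal_pdf_gt0.
Qed.

Lemma Phi0_opp x : Phi0 (- x) = - Phi0 x.
Proof.
pose proof (RInt_comp_lin (V:=R_CompleteNormedModule) std_normal_pdf (-1) 0 0 x
  (ex_RInt_std_normal_pdf _ _)) as change_var.
replace (-1 * 0 + 0) with 0 in change_var by ring.
replace (-1 * x + 0) with (- x) in change_var by ring.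
unfold Phi0. rewrite <- change_var.
rewrite <- (RInt_opp (V:=R_CompleteNormedModule)) by apply ex_RInt_std_normal_pdf.
apply RInt_ext. intros t _. cbn. unfold scal, opp, mult. cbn.
replace (-1 * t + 0) with (- t) by ring. rewrite std_normal_pdf_opp. ring.
Qed.

Lemma Phi0_gauss x : Phi0 x = RInt gauss 0 (x / sqrt 2) / sqrt PI.
Proof.
assert (s2 : 0 < sqrt 2) by (apply sqrt_lt_R0; lra).
assert (sP : 0 < sqrt PI) by (apply sqrt_lt_R0, PI_RGT_0).
assert (ex_gauss : forall a b, ex_RInt gauss a b).
{ intros a b. apply (ex_RInt_continuous (V:=R_CompleteNormedModule)).
  intros t _. apply continuous_gauss. }
pose proof (RInt_comp_lin (V:=R_CompleteNormedModule) gauss (/ sqrt 2) 0 0 x (ex_gauss _ _))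
  as change_var.
replace (/ sqrt 2 * 0 + 0) with 0 in change_var by ring.
replace (/ sqrt 2 * x + 0) with (x / sqrt 2) in change_var by (unfold Rdiv; ring).
unfold Phi0. rewrite <- change_var.
transitivity
  (RInt (fun t => scal (/ sqrt PI) (scal (/ sqrt 2) (gauss (/ sqrt 2 * t + 0)))) 0 x).
- apply RInt_ext. intros t _. cbn. unfold scal, mult. cbn.
  rewrite std_normal_pdf_gauss.
  replace (/ sqrt 2 * t + 0) with (t / sqrt 2) by (unfold Rdiv; ring).
  field. lra.
- rewrite (RInt_scal (V:=R_CompleteNormedModule)).
  + cbn. unfold scal, mult. cbn. unfold Rdiv. ring.
  + apply (ex_RInt_comp_lin (V:=R_CompleteNormedModule)), ex_gauss.
Qed.

Lemma Phi0_cvg_half e : 0 < e -> exists M, forall x, M < x -> Rabs (Phi0 x - 1 / 2) < e.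
Proof.
intros e_pos.
assert (PI_pos := PI_RGT_0).
assert (s2 : 0 < sqrt 2) by (apply sqrt_lt_R0; lra).
destruct (GaussIntegral.RInt_gauss_sqr_lim (e * PI / 2)) as [M HM]; [nra|].
exists (Rmax (sqrt 2 * M) 0). intros x Hx.
assert (x_pos : 0 < x) by (pose proof (Rmax_r (sqrt 2 * M) 0); lra).
assert (M_lt : M < x / sqrt 2).
{ pose proof (Rmax_l (sqrt 2 * M) 0).
  apply (Rmult_lt_reg_l (sqrt 2)); [exact s2|]. field_simplify; lra. }
specialize (HM _ M_lt).
assert (g_ge0 := Phi0_ge0 x (Rlt_le _ _ x_pos)).
assert (I_eq : RInt gauss 0 (x / sqrt 2) = Phi0 x * sqrt PI).
{ rewrite Phi0_gauss. unfold Rdiv. rewrite Rmult_assoc, Rinv_l, Rmult_1_r; [reflexivity|].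
  apply Rgt_not_eq, sqrt_lt_R0, PI_pos. }
rewrite I_eq, Rpow_mult_distr, pow2_sqrt in HM by lra.
replace (Phi0 x ^ 2 * PI - PI / 4) with (PI * ((Phi0 x - 1 / 2) * (Phi0 x + 1 / 2)))
  in HM by field.
rewrite !Rabs_mult, (Rabs_right PI), (Rabs_right (Phi0 x + 1 / 2)) in HM by lra.
assert (Rabs (Phi0 x - 1 / 2) * (Phi0 x + 1 / 2) < e / 2).
{ apply (Rmult_lt_reg_l PI); lra. }
pose proof (Rabs_pos (Phi0 x - 1 / 2)). nra.
Qed.

Lemma Phi_Phi0 x : Phi x = 1 / 2 + Phi0 x.
Proof.
apply (is_RInt_gen_unique (V:=R_CompleteNormedModule)).
intros P [e HP].
destruct (Phi0_cvg_half e (cond_pos e)) as [M HM].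
apply (Filter_prod _ _ _ (fun a => a < - M) (fun b => b = x)).
- exists (- M). auto.
- reflexivity.
- intros a b Ha <-. exists (RInt std_normal_pdf a b). split.
  + apply (RInt_correct (V:=R_CompleteNormedModule)), ex_RInt_std_normal_pdf.
  + apply HP. change (Rabs (RInt std_normal_pdf a b - (1 / 2 + Phi0 b)) < e).
    rewrite RInt_std_normal_pdf.
    replace (Phi0 b - Phi0 a - (1 / 2 + Phi0 b)) with (- Phi0 a - 1 / 2) by field.
    rewrite <- Phi0_opp. apply HM. lra.
Qed.

Lemma RInt_std_normal_pdf_le a b :
  1 <= a <= b -> RInt std_normal_pdf a b <= exp (- a ^ 2 / 2) / 2.
Proof.
intros [a_ge1 a_le_b].
set (h t := t * exp (- t ^ 2 / 2) / 2).
set (H t := - exp (- t ^ 2 / 2) / 2).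
assert (h_int : is_RInt h a b (H b - H a)).
{ apply (is_RInt_derive (V:=R_CompleteNormedModule)).
  - intros t _. unfold H, h. auto_derive; [trivial |].
    replace (- (t * (t * 1)) * / 2) with (- t ^ 2 / 2) by field. field.
  - intros t _. apply (ex_derive_continuous (K:=R_AbsRing) (V:=R_NormedModule)).
    unfold h. auto_derive. trivial. }
apply Rle_trans with (RInt h a b).
- apply RInt_le; [exact a_le_b | apply ex_RInt_std_normal_pdf | eexists; exact h_int |].
  intros t Ht. unfold std_normal_pdf, h.
  pose proof sqrt_2PI_ge2. pose proof (exp_pos (- t ^ 2 / 2)).
  apply Rle_trans with (exp (- t ^ 2 / 2) / 2).
  + apply Rmult_le_compat_l; [lra|]. apply Rinv_le_contravar; lra.
  + unfold Rdiv. nra.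
- rewrite (is_RInt_unique _ _ _ _ h_int). unfold H.
  pose proof (exp_pos (- b ^ 2 / 2)). lra.
Qed.

Lemma Phi0_tail x : 1 <= x -> 1 / 2 - Phi0 x <= exp (- x ^ 2 / 2) / 2.
Proof.
intros x_ge1. apply Rle_plus_epsilon. intros e e_pos.
destruct (Phi0_cvg_half e e_pos) as [M HM].
set (y := Rmax (M + 1) x).
assert (M_lt_y : M < y) by (pose proof (Rmax_l (M + 1) x); unfold y; lra).
specialize (HM y M_lt_y). apply Rabs_def2 in HM.
pose proof (RInt_std_normal_pdf_le x y (conj x_ge1 (Rmax_r _ _))) as tail.
rewrite RInt_std_normal_pdf in tail. lra.
Qed.

Lemma Phi_Phi_inv p : 0 < p < 1 -> Phi (Phi_inv p) = p.
Proof.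
intros Hp. unfold Phi_inv. apply epsilon_spec.
set (e := Rmin p (1 - p)).
assert (e_pos : 0 < e) by (apply Rmin_glb_lt; lra).
assert (e_le : e <= p /\ e <= 1 - p) by (split; [apply Rmin_l | apply Rmin_r]).
destruct (Phi0_cvg_half e e_pos) as [M HM].
set (x := Rabs M + 1).
assert (M_lt_x : M < x) by (pose proof (Rle_abs M); unfold x; lra).
specialize (HM x M_lt_x). apply Rabs_def2 in HM.
pose proof (Phi0_opp x) as Phi0_neg.
destruct (IVT_gen Phi0 (- x) x (p - 1 / 2) continuity_Phi0) as [z [_ Hz]].
- rewrite Phi0_neg, Rmin_left, Rmax_right; lra.
- exists z. rewrite Phi_Phi0, Hz. ring.
Qed.

Lemma pow8_exp_le y : y ^ 8 * exp (- y ^ 2 / 2) <= 4096.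
Proof.
set (v := exp (y ^ 2 / 8)).
assert (v_pow4 : exp (- y ^ 2 / 2) * v ^ 4 = 1).
{ unfold v. replace (exp (y ^ 2 / 8) ^ 4)
    with (exp (y ^ 2 / 8) * exp (y ^ 2 / 8) * exp (y ^ 2 / 8) * exp (y ^ 2 / 8)) by ring.
  rewrite <- !exp_plus, <- exp_0. f_equal. field. }
assert (y2_le : y ^ 2 <= 8 * v) by (pose proof (exp_ineq1_le (y ^ 2 / 8)); unfold v; lra).
assert (y8_le : (y ^ 2) ^ 4 <= (8 * v) ^ 4)
  by (apply pow_incr; split; [apply pow2_ge_0 | exact y2_le]).
pose proof (exp_pos (- y ^ 2 / 2)).
replace (y ^ 8) with ((y ^ 2) ^ 4) by ring.
apply Rle_trans with ((8 * v) ^ 4 * exp (- y ^ 2 / 2)).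
- apply Rmult_le_compat_r; lra.
- replace ((8 * v) ^ 4 * exp (- y ^ 2 / 2)) with (4096 * (exp (- y ^ 2 / 2) * v ^ 4))
    by ring.
  rewrite v_pow4. lra.
Qed.

Lemma Phi0_tail_pow8 y : 1 <= y -> (1 / 2 - Phi0 y) * y ^ 8 <= 2 ^ 11.
Proof.
intros y_ge1.
pose proof (Phi0_tail y y_ge1). pose proof (pow8_exp_le y).
assert (0 <= y ^ 8) by (apply pow_le; lra).
apply Rle_trans with (exp (- y ^ 2 / 2) / 2 * y ^ 8); [apply Rmult_le_compat_r; lra | lra].
Qed.

Lemma Phi_inv_pow8_le p : 0 < p < 1 -> Rmin p (1 - p) * Phi_inv p ^ 8 <= 2 ^ 11.
Proof.
intros Hp.
pose proof (Phi_Phi_inv p Hp) as Phi_x. rewrite Phi_Phi0 in Phi_x.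
set (x := Phi_inv p) in *.
assert (x8_ge0 : 0 <= x ^ 8) by (replace (x ^ 8) with ((x ^ 4) ^ 2) by ring; apply pow2_ge_0).
pose proof (Rmin_l p (1 - p)). pose proof (Rmin_r p (1 - p)).
destruct (Rle_or_lt 1 x) as [x_ge1 | x_lt1]; [| destruct (Rle_or_lt x (-1)) as [x_le | x_gt]].
- pose proof (Phi0_tail_pow8 x x_ge1) as upper_tail.
  apply Rle_trans with ((1 / 2 - Phi0 x) * x ^ 8); [apply Rmult_le_compat_r |]; lra.
- pose proof (Phi0_tail_pow8 (- x) ltac:(lra)) as lower_tail.
  rewrite Phi0_opp in lower_tail. replace ((- x) ^ 8) with (x ^ 8) in lower_tail by ring.
  apply Rle_trans with ((1 / 2 + Phi0 x) * x ^ 8); [apply Rmult_le_compat_r |]; lra.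
- assert (x8_le1 : x ^ 8 <= 1).
  { replace (x ^ 8) with ((x ^ 2) ^ 4) by ring. rewrite <- (pow1 4).
    apply pow_incr. split; [apply pow2_ge_0 | nra]. }
  nra.
Qed.

Lemma rpow_pos x y : 0 < x -> rpow x y = Rpower x y.
Proof. intros x_pos. unfold rpow. destruct (Req_EM_T x 0); [lra | reflexivity]. Qed.

Lemma rpow_abs_le_of_pow8 x m eps : 0 < m -> 0 <= eps -> m * x ^ 8 <= 2 ^ 11 ->
  rpow (Rabs x) (2 * eps) <= Rpower 2 (11 / 4 * eps) * Rpower m (- (eps / 4)).
Proof.
intros m_pos eps_ge0 mx8_le.
assert (rhs_pos : 0 < Rpower 2 (11 / 4 * eps) * Rpower m (- (eps / 4)))
  by (apply Rmult_lt_0_compat; apply exp_pos).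
destruct (Req_dec x 0) as [-> | x_neq0].
- rewrite Rabs_R0. unfold rpow. destruct (Req_EM_T 0 0) as [_ | ]; [| lra].
  destruct (Req_EM_T (2 * eps) 0) as [eps0 | _]; [| lra].
  replace (11 / 4 * eps) with 0 by lra. replace (- (eps / 4)) with 0 by lra.
  rewrite !Rpower_O by lra. lra.
- assert (abs_pos : 0 < Rabs x) by (apply Rabs_pos_lt, x_neq0).
  assert (abs8_pos : 0 < Rabs x ^ 8) by (apply pow_lt, abs_pos).
  rewrite rpow_pos by exact abs_pos.
  replace (2 * eps) with (INR 8 * (eps / 4)) by (simpl; field).
  rewrite <- Rpower_mult, Rpower_pow by exact abs_pos.
  apply Rle_trans with (Rpower (2 ^ 11 / m) (eps / 4)).
  + apply Rle_Rpower_l; [lra | split; [exact abs8_pos |]].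
    apply (Rmult_le_reg_l m); [exact m_pos |].
    replace (Rabs x ^ 8) with ((Rabs x ^ 2) ^ 4) by ring. rewrite pow2_abs.
    field_simplify; lra.
  + right. unfold Rpower. rewrite <- exp_plus, ln_div, ln_pow by (try apply pow_lt; lra).
    f_equal. simpl INR. field.
Qed.

Definition tail_weight (eps : R) (j : nat) : R := Rpower (INR j) (- (eps / 4)).

Lemma Rmin_div_INR a b d : 0 < d -> Rmin (INR a / d) (INR b / d) = INR (Nat.min a b) / d.
Proof.
intros d_pos.
assert (div_le : forall i j, (i <= j)%nat -> INR i / d <= INR j / d).
{ intros i j ij. apply Rmult_le_compat_r; [left; apply Rinv_0_lt_compat, d_pos |].
  apply le_INR, ij. }
destruct (Nat.le_ge_cases a b) as [ab | ba].
- rewrite Nat.min_l by exact ab. apply Rmin_left, div_le, ab.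
- rewrite Nat.min_r by exact ba. apply Rmin_right, div_le, ba.
Qed.

Lemma quantile_term_le n k eps : (k < n)%nat -> 0 <= eps ->
  rpow (Rabs (Phi_inv (INR (k + 1) / INR (n + 1)))) (2 * eps)
  <= Rpower 2 (11 / 4 * eps) * Rpower (INR (n + 1)) (eps / 4)
     * tail_weight eps (Nat.min (k + 1) (n - k)).
Proof.
intros k_lt eps_ge0.
assert (N_pos : 0 < INR (n + 1)) by (apply lt_0_INR; lia).
set (p := INR (k + 1) / INR (n + 1)).
assert (Hp : 0 < p < 1).
{ assert (0 < INR (k + 1) < INR (n + 1)) by (split; [apply lt_0_INR | apply lt_INR]; lia).
  unfold p. split; [apply Rdiv_lt_0_compat; lra |].
  apply (Rmult_lt_reg_r (INR (n + 1))); [exact N_pos |]. field_simplify; lra. }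
assert (level : Rmin p (1 - p) = INR (Nat.min (k + 1) (n - k)) / INR (n + 1)).
{ replace (1 - p) with (INR (n - k) / INR (n + 1)).
  - apply Rmin_div_INR, N_pos.
  - unfold p. rewrite minus_INR by lia. rewrite !plus_INR. field.
    rewrite plus_INR in N_pos. lra. }
assert (j_pos : 0 < INR (Nat.min (k + 1) (n - k))) by (apply lt_0_INR; lia).
eapply Rle_trans.
- apply rpow_abs_le_of_pow8; [| exact eps_ge0 | apply Phi_inv_pow8_le, Hp].
  apply Rmin_glb_lt; lra.
- rewrite level. right. unfold tail_weight, Rpower.
  rewrite ln_div, <- !exp_plus by assumption. f_equal. field.
Qed.

Lemma increment_ge_of_deriv_antitone (f f' : R -> R) a b : a < b ->
  (forall x, a <= x <= b -> derivable_pt_lim f x (f' x)) ->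
  (forall x, a <= x <= b -> f' b <= f' x) ->
  (b - a) * f' b <= f b - f a.
Proof.
intros ab f_deriv f'_ge.
destruct (MVT_cor2 f f' a b ab f_deriv) as [c [-> c_in]].
rewrite Rmult_comm. apply Rmult_le_compat_r; [lra |]. apply f'_ge. lra.
Qed.

Lemma bracket_term_step eps j : (1 <= j)%nat -> 0 <= eps ->
  bracket_term (INR j) eps + tail_weight eps (S j) <= bracket_term (INR (S j)) eps.
Proof.
(* [bracket_term x eps = int_1^x t ^ (- eps / 4) dt]: compare the integral over
   [j, j + 1] with the value of the integrand at [j + 1]. *)
intros j_ge1 eps_ge0.
assert (j_pos : 1 <= INR j) by (apply (le_INR 1), j_ge1).
rewrite S_INR.
set (g x := Rpower x (- (eps / 4))).
set (F x := if Req_EM_T eps 4 then ln x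
            else / (1 - eps / 4) * Rpower x (1 - eps / 4)).
assert (F_deriv : forall x, 0 < x -> derivable_pt_lim F x (g x)).
{ intros x x_pos. unfold F, g. destruct (Req_EM_T eps 4) as [-> | eps_neq4].
  - rewrite Rpower_Ropp. replace (4 / 4) with 1 by field.
    rewrite Rpower_1 by exact x_pos. apply derivable_pt_lim_ln, x_pos.
  - replace (Rpower x (- (eps / 4)))
      with (/ (1 - eps / 4) * ((1 - eps / 4) * Rpower x (1 - eps / 4 - 1))).
    + apply (derivable_pt_lim_scal (fun y => Rpower y (1 - eps / 4))),
        derivable_pt_lim_power, x_pos.
    + replace (1 - eps / 4 - 1) with (- (eps / 4)) by ring. field. lra. }
assert (F_bracket : forall x, 0 < x -> bracket_term x eps = F x - F 1).
{ intros x x_pos. unfold bracket_term, F, rpow.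
  destruct (Req_EM_T eps 4); [rewrite ln_1; ring |].
  destruct (Req_EM_T x 0); [lra |].
  replace (Rpower 1 (1 - eps / 4)) with 1
    by (unfold Rpower; rewrite ln_1, Rmult_0_r, exp_0; reflexivity).
  field. lra. }
assert (g_antitone : forall x y, 0 < x <= y -> g y <= g x).
{ intros x y xy. unfold g. rewrite !Rpower_Ropp.
  apply Rinv_le_contravar; [apply exp_pos |]. apply Rle_Rpower_l; lra. }
rewrite !F_bracket by lra.
pose proof (increment_ge_of_deriv_antitone F g (INR j) (INR j + 1)) as incr.
unfold tail_weight. rewrite S_INR. fold (g (INR j + 1)).
assert ((INR j + 1 - INR j) * g (INR j + 1) <= F (INR j + 1) - F (INR j)); [| lra].
apply incr; [lra | |].
- intros x Hx. apply F_deriv. lra.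
- intros x Hx. apply g_antitone. lra.
Qed.

Lemma tail_weight_1 eps : tail_weight eps 1 = 1.
Proof. unfold tail_weight, Rpower. simpl INR. rewrite ln_1, Rmult_0_r. apply exp_0. Qed.

Lemma bracket_term_1 eps : bracket_term 1 eps = 0.
Proof.
unfold bracket_term, rpow. rewrite ln_1.
destruct (Req_EM_T eps 4); [reflexivity |].
destruct (Req_EM_T 1 0); [lra |].
unfold Rpower. rewrite ln_1, Rmult_0_r, exp_0. field. lra.
Qed.

Definition tail_weight_upto (eps : R) (c j : nat) : R :=
  if (j <=? c)%nat then tail_weight eps j else 0.

Lemma tail_weight_upto_ge0 eps c j : 0 <= tail_weight_upto eps c j.
Proof. unfold tail_weight_upto. destruct (j <=? c)%nat; [left; apply exp_pos | lra]. Qed.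

Lemma tail_weight_min_le eps c a b : (Nat.min a b <= c)%nat ->
  tail_weight eps (Nat.min a b) <= tail_weight_upto eps c a + tail_weight_upto eps c b.
Proof.
intros min_le.
assert (upto_eq : forall j, (j <= c)%nat -> tail_weight_upto eps c j = tail_weight eps j).
{ intros j j_le. unfold tail_weight_upto. apply Nat.leb_le in j_le. rewrite j_le. reflexivity. }
pose proof (tail_weight_upto_ge0 eps c a). pose proof (tail_weight_upto_ge0 eps c b).
destruct (Nat.le_ge_cases a b) as [ab | ba].
- rewrite Nat.min_l in * by exact ab. rewrite upto_eq by exact min_le. lra.
- rewrite Nat.min_r in * by exact ba. rewrite (upto_eq b) by exact min_le. lra.
Qed.

Lemma sum_tail_weight_upto_le eps c N : 0 <= eps -> (1 <= c)%nat ->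
  sum_f_R0 (fun k => tail_weight_upto eps c (S k)) N
  <= 1 + bracket_term (INR (Nat.min (S N) c)) eps.
Proof.
intros eps_ge0 c_ge1. induction N as [| N IH].
- replace (Nat.min 1 c) with 1%nat by lia. cbn - [tail_weight].
  unfold tail_weight_upto. replace (1 <=? c)%nat with true by (symmetry; apply Nat.leb_le; lia).
  rewrite tail_weight_1, bracket_term_1. lra.
- cbn [sum_f_R0]. unfold tail_weight_upto at 2.
  destruct (S (S N) <=? c)%nat eqn:SSN_le.
  + apply Nat.leb_le in SSN_le.
    rewrite Nat.min_l in IH by lia. rewrite Nat.min_l by lia.
    pose proof (bracket_term_step eps (S N) ltac:(lia) eps_ge0). lra.
  + apply Nat.leb_gt in SSN_le.
    rewrite Nat.min_r in IH by lia. rewrite Nat.min_r by lia. lra.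
Qed.

Lemma sum_f_R0_rev (f : nat -> R) N :
  sum_f_R0 (fun k => f (N - k)%nat) N = sum_f_R0 f N.
Proof.
induction N as [| N IH]; [reflexivity |].
rewrite decomp_sum, tech5, <- IH by lia. cbn [pred].
rewrite Nat.sub_0_r, Rplus_comm. reflexivity.
Qed.

Lemma sum_tail_weight_pairs_le eps n c : 0 <= eps -> (1 <= c <= n)%nat ->
  sum_f_R0 (fun k => tail_weight_upto eps c (S k) + tail_weight_upto eps c (n - k)) (n - 1)
  <= 2 * (1 + bracket_term (INR c) eps).
Proof.
intros eps_ge0 c_bounds.
rewrite plus_sum.
replace (sum_f_R0 (fun k => tail_weight_upto eps c (n - k)) (n - 1))
  with (sum_f_R0 (fun k => tail_weight_upto eps c (S k)) (n - 1)).
- pose proof (sum_tail_weight_upto_le eps c (n - 1) eps_ge0 ltac:(lia)) as sum_le.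
  replace (Nat.min (S (n - 1)) c) with c in sum_le by lia. lra.
- rewrite <- (sum_f_R0_rev (fun k => tail_weight_upto eps c (S k))).
  apply sum_eq. intros k k_le. f_equal. lia.
Qed.

Lemma ceil_half_succ_spec n : (n + 1 <= 2 * ceil_half_succ n <= n + 2)%nat.
Proof.
unfold ceil_half_succ.
pose proof (Nat.div_mod (n + 2) 2 ltac:(lia)).
pose proof (Nat.mod_upper_bound (n + 2) 2 ltac:(lia)). lia.
Qed.

Theorem lemma7 (n : nat) (eps : R) :
  (1 <= n)%nat -> 0 <= eps ->
  sum_f_R0 (fun k => rpow (Rabs (Phi_inv (INR (k + 1) / INR (n + 1)))) (2 * eps)) (n - 1)
  <= rpow 2 (11 / 4 * eps + 1) * rpow (INR (n + 1)) (eps / 4)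
     * (1 + bracket_term (INR (ceil_half_succ n)) eps).
Proof.
intros n_ge1 eps_ge0.
pose proof (ceil_half_succ_spec n) as c_spec.
set (c := ceil_half_succ n) in *.
set (A := Rpower 2 (11 / 4 * eps) * Rpower (INR (n + 1)) (eps / 4)).
assert (A_pos : 0 < A) by (apply Rmult_lt_0_compat; apply exp_pos).
replace (rpow 2 (11 / 4 * eps + 1) * rpow (INR (n + 1)) (eps / 4)) with (A * 2).
2: { rewrite !rpow_pos by (try apply lt_0_INR; lia || lra).
     rewrite Rpower_plus, Rpower_1 by lra. unfold A. ring. }
rewrite Rmult_assoc.
eapply Rle_trans;
  [| apply Rmult_le_compat_l; [lra | apply (sum_tail_weight_pairs_le eps n c eps_ge0); lia]].
rewrite scal_sum. apply sum_Rle. intros k k_le.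
eapply Rle_trans; [apply quantile_term_le; [lia | exact eps_ge0] |].
rewrite (Rmult_comm _ A). apply Rmult_le_compat_l; [lra |].
replace (k + 1)%nat with (S k) by lia. apply tail_weight_min_le. lia.
Qed.
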